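(* Let $V=\{(a_1,a_2,\ldots)\mid a_i\in\mathbb{C},\ \sum_i|a_i|^2<\infty\}$ with quadratic form $f((a_i))=\sum_i a_i^2$ and associated bilinear form $f(u,v)=f(u+v)-f(u)-f(v)$, and let $Cl(V,f)$ be its Clifford algebra. For $v\in V$ let $v^{\perp}=\{v'\in V\mid f(v,v')=0\}$ and let $C(v)=\{a\in Cl(V,f)\mid va=av\}$. (A) If $v\in V$ and $f(v)=1$, then $C(v)=v\,Cl(v^{\perp},f)_{\bar0}+Cl(v^{\perp},f)_{\bar0}$. (B) Let $n$ be odd and, for $1\le i\le n$, let $v_i\in V$ be the sequence with $1$ in position $i$ and $0$ elsewhere. Then $$C(v_1)\cap\cdots\cap C(v_n)=v_1v_2\cdots v_n\,Cl(v_1^{\perp}\cap\cdots\cap v_n^{\perp},f)_{\bar0}+Cl(v_1^{\perp}\cap\cdots\cap v_n^{\perp},f)_{\bar0}.$$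
   Context: The Clifford algebra $Cl(V,f)$ is the unital associative $\mathbb{C}$-algebra generated by $V$ and $1$ subject to $v^2=f(v)\cdot1$ for $v\in V$. For a subspace $U\subseteq V$, $Cl(U,f)$ denotes the subalgebra generated by $1$ and $U$. $Cl(U,f)$ carries the natural $\mathbb{Z}/2\mathbb{Z}$-grading $Cl(U,f)=Cl(U,f)_{\bar0}+Cl(U,f)_{\bar1}$, where $Cl(U,f)_{\bar0}$ is spanned by all products of an even number of elements of $U$ (including the empty product $1$) and $Cl(U,f)_{\bar1}$ by all products of an odd number of elements of $U$. *)

From HB Require Import structures.
From mathcomp Require Import all_boot all_order all_algebra.
From mathcomp Require Import all_classical all_reals.
From mathcomp Require Import topology normedtype sequences.
From mathcomp Require Import complex.
From Stdlib Require List.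
Set Implicit Arguments. Unset Strict Implicit. Unset Printing Implicit Defensive.
Import Order.TTheory GRing.Theory Num.Theory numFieldNormedType.Exports.
Local Open Scope ring_scope.
Local Open Scope classical_set_scope.

(* Complex numbers are modelled as R[i] over an arbitrary realType R
   (every realType is isomorphic to the reals). *)

Section Hilbert.
Variable R : realType.
Local Notation C := (complex R).

(* complex sequences (a_1, a_2, ...) ; index 0 plays the role of position 1 *)
Definition cseq := nat -> C.

Definition sqnorm (z : C) : R := complex.Re z ^+ 2 + complex.Im z ^+ 2.

Definition inV (a : cseq) : Prop := cvgn (series (fun k => sqnorm (a k))).

Definition sadd (a b : cseq) : cseq := fun k => a k + b k.
Definition sscale (c : C) (a : cseq) : cseq := fun k => c * a k.

(* quadratic form f((a_i)) = sum_i a_i^2 (a convergent complex series for a in V;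
   its real and imaginary parts are absolutely convergent real series) *)
Definition qf (a : cseq) : C :=
  Complex (limn (series (fun k => complex.Re (a k ^+ 2))))
          (limn (series (fun k => complex.Im (a k ^+ 2)))).

Definition bf (u v : cseq) : C := qf (sadd u v) - qf u - qf v.

Definition perp (v : cseq) : cseq -> Prop := fun w => inV w /\ bf v w = 0.

Definition unitv (i : nat) : cseq := fun k => if k.+1 == i then 1 else 0.

(* Cl(V,f) given by its presentation: a unital associative C-algebra A with a
   map iota : V -> A, linear on V, with iota(v)^2 = f(v) 1, which is universal
   (initial) among such data. *)
Definition alg_morph (A B : algType C) (h : A -> B) : Prop :=
  [/\ forall x y, h (x + y) = h x + h y,
      forall x y, h (x * y) = h x * h y,
      h 1 = 1 &
      forall (c : C) x, h (c *: x) = c *: h x].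

Definition clifford_data (B : algType C) (g : cseq -> B) : Prop :=
  (forall (c : C) u v, inV u -> inV v -> g (sadd (sscale c u) v) = c *: g u + g v)
  /\ (forall v, inV v -> g v * g v = (qf v)%:A).

Definition is_clifford (A : algType C) (iota : cseq -> A) : Prop :=
  clifford_data iota /\
  forall (B : algType C) (g : cseq -> B), clifford_data g ->
    (exists h : A -> B, alg_morph h /\ forall v, inV v -> h (iota v) = g v) /\
    (forall h1 h2 : A -> B, alg_morph h1 -> alg_morph h2 ->
       (forall v, inV v -> h1 (iota v) = g v) ->
       (forall v, inV v -> h2 (iota v) = g v) -> h1 =1 h2).

Definition cl_even (A : algType C) (iota : cseq -> A) (U : cseq -> Prop)
    (a : A) : Prop :=
  exists (k : nat) (c : 'I_k -> C) (w : 'I_k -> seq cseq),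
    (forall i, List.Forall U (w i) /\ ~~ odd (size (w i))) /\
    a = \sum_(i < k) c i *: \prod_(x <- w i) iota x.

Definition centr (A : algType C) (iota : cseq -> A) (v : cseq) (a : A) : Prop :=
  iota v * a = a * iota v.

End Hilbert.

From HB Require Import structures.
From mathcomp Require Import all_boot all_order all_algebra.
From mathcomp Require Import all_classical all_reals.
From mathcomp Require Import topology normedtype sequences.
From mathcomp Require Import complex.
From mathcomp Require Import ring.
Import Order.TTheory GRing.Theory Num.Theory numFieldNormedType.Exports.
Local Open Scope ring_scope.

(* Both parts are the case of an orthonormal frame e_1, ..., e_n with n odd (n = 1 and
   e_1 = v for (A)); let V' be the orthogonal complement of the frame in V.
   Every element of Cl(V,f) is a sum a0 + a1 of an even and an odd element, since these
   sums form a subalgebra containing V, and the grading automorphism v |-> -v shows that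
   a0 and a1 commute with e_j whenever a0 + a1 does. Writing each vector as a multiple of
   a unit vector e plus a vector orthogonal to e gives
   Cl(U)_p = Cl(U /\ e^perp)_p + e Cl(U /\ e^perp)_(p+1), and an even element commuting
   with e has no second component; by induction, an even element commuting with every e_j
   lies in Cl(V')_0. For odd n the product E = e_1 ... e_n commutes with every e_j and
   E^2 = +-1, so a commuting odd a1 equals E (+-E a1) with +-E a1 even and commuting. *)

Set Implicit Arguments. Unset Strict Implicit. Unset Printing Implicit Defensive.

Section SquareSummable.
Variable R : realType.
Local Open Scope classical_set_scope.
Local Notation C := (complex R).
Implicit Types (c z : C) (u v : cseq R).

Lemma sqnorm_ge0 z : 0 <= sqnorm z.
Proof. by rewrite addr_ge0 ?sqr_ge0. Qed.

Lemma sqnorm_muladd_le c z z' :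
  sqnorm (c * z + z') <= 2 * (sqnorm c * sqnorm z) + 2 * sqnorm z'.
Proof.
case: c z z' => [cr ci] [zr zi] [zr' zi']; rewrite /sqnorm /= -subr_ge0.
set d := (X in 0 <= X).
have -> : d = (cr * zr - ci * zi - zr') ^+ 2 + (cr * zi + ci * zr - zi') ^+ 2.
  by rewrite /d; ring.
by rewrite addr_ge0 ?sqr_ge0.
Qed.

Lemma inV_scale_add c u v : inV u -> inV v -> inV (sadd (sscale c u) v).
Proof.
move=> Vu Vv; apply: (@series_le_cvg R _
  (fun k => 2 * sqnorm c * sqnorm (u k) + 2 * sqnorm (v k))).
- by move=> k; exact: sqnorm_ge0.
- by move=> k; rewrite addr_ge0 ?mulr_ge0 ?sqnorm_ge0.
- by move=> k; rewrite -mulrA; exact: sqnorm_muladd_le.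
have -> : (fun k => 2 * sqnorm c * sqnorm (u k) + 2 * sqnorm (v k)) =
    (2 * sqnorm c) *: ((fun k => sqnorm (u k)) : R^o ^nat)
    + 2 *: ((fun k => sqnorm (v k)) : R^o ^nat) by [].
by apply: is_cvg_seriesD; exact: is_cvg_seriesZ.
Qed.

Definition indicator (i k : nat) : R := (k == i)%:R.

Lemma series_indicator_near i : \forall n \near \oo, series (indicator i) n = 1.
Proof.
exists i.+1 => // n /= lt_in.
rewrite /series /= (bigD1_seq i) ?mem_iota ?subn0 ?iota_uniq //=.
by rewrite /indicator eqxx big1 ?addr0 // => k /negbTE ->.
Qed.

Lemma cvg_series_indicator i : cvgn (series (indicator i)).
Proof. by apply: is_cvg_near_cst; exact: series_indicator_near. Qed.

Lemma lim_series_indicator i : limn (series (indicator i)) = 1.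
Proof. by apply: lim_near_cst => //; exact: series_indicator_near. Qed.

Lemma lim_series0 : limn (series (fun _ : nat => 0 : R)) = 0.
Proof.
have -> : series (fun _ : nat => 0 : R) = fun=> 0.
  by apply/funext => n; rewrite /series /= big1.
exact: lim_cst.
Qed.

Lemma unitvE j k : unitv R j.+1 k = (k == j)%:R.
Proof. by rewrite /unitv eqSS; case: eqP. Qed.

Lemma inV_unitv j : inV (unitv R j.+1).
Proof.
rewrite /inV (_ : (fun k => _) = indicator j); first exact: cvg_series_indicator.
apply/funext => k; rewrite unitvE /indicator /sqnorm.
by case: eqP; rewrite /= ?expr0n ?expr1n addr0.
Qed.

Lemma qf_unitv j : qf (unitv R j.+1) = 1.
Proof.
rewrite /qf (_ : (fun k => _) = indicator j); last first.
  by apply/funext => k; rewrite unitvE /indicator; case: eqP; rewrite ?expr0n ?expr1n.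
rewrite (_ : (fun k => _) = fun=> 0); last first.
  by apply/funext => k; rewrite unitvE; case: eqP; rewrite ?expr0n ?expr1n.
by rewrite lim_series_indicator lim_series0.
Qed.

Lemma bf_unitv i j : i != j -> bf (unitv R i.+1) (unitv R j.+1) = 0.
Proof.
move=> neq_ij; rewrite /bf !qf_unitv.
suff -> : qf (sadd (unitv R i.+1) (unitv R j.+1)) = 1 + 1 by rewrite addrK subrr.
have sumE k : sadd (unitv R i.+1) (unitv R j.+1) k ^+ 2 =
    Complex (indicator i k + indicator j k) 0.
  rewrite /sadd !unitvE /indicator; case: (eqVneq k i) => [->|_].
    by rewrite (negbTE neq_ij) !addr0 expr1n.
  by case: eqP; rewrite !add0r ?expr0n ?expr1n.
rewrite /qf (_ : (fun k => _) = indicator i + indicator j); last first.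
  by apply/funext => k; rewrite sumE.
rewrite (_ : (fun k => _) = fun=> 0); last by apply/funext => k; rewrite sumE.
rewrite lim_seriesD; [|exact: cvg_series_indicator..].
rewrite !lim_series_indicator lim_series0.
by apply/eqP; rewrite eq_complex /= addr0 !eqxx.
Qed.

End SquareSummable.

Lemma addrr_eq0 (F : numFieldType) (M : lmodType F) (x : M) :
  (x + x == 0) = (x == 0).
Proof. by rewrite -mulr2n -scaler_nat scaler_eq0 pnatr_eq0. Qed.

Section Subspaces.
Variable R : realType.
Local Notation V := (@inV R).
Implicit Types (U : cseq R -> Prop) (e : nat -> cseq R).

Definition subspace U :=
  (forall u, U u -> V u) /\ forall c u w, U u -> U w -> U (sadd (sscale c u) w).

Definition perp_within U (ee w : cseq R) := U w /\ bf ee w = 0.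

Fixpoint frame_perp e k : cseq R -> Prop :=
  if k is k'.+1 then perp_within (frame_perp e k') (e k') else V.

Lemma subspace_inV : subspace V.
Proof. by split => // c u w; exact: inV_scale_add. Qed.

Lemma frame_perpP e k w :
  frame_perp e k w <-> V w /\ forall i, (i < k)%N -> bf (e i) w = 0.
Proof.
elim: k => [|k IH] /=; first by split => [|[]].
split=> [[/IH [Vw perp_w] ekw]|[Vw perp_w]].
  by split=> // i; rewrite ltnS leq_eqVlt => /predU1P [->|/perp_w].
by split; [apply/IH; split=> // i /leqW/perp_w | exact: perp_w].
Qed.

Lemma bfC (u w : cseq R) : bf u w = bf w u.
Proof.
rewrite /bf (_ : sadd u w = sadd w u) 1?addrAC //.
by apply/funext => k; rewrite /sadd addrC.
Qed.

End Subspaces.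

Section ParityWords.
Variables (R : realType) (A : algType (complex R)) (iota : cseq R -> A).
Local Notation C := (complex R).
Implicit Types (U : cseq R -> Prop) (p : bool) (x y : A).

Inductive cl_par U : bool -> A -> Prop :=
| cl_par1 : cl_par U false 1
| cl_par0 p : cl_par U p 0
| cl_parD p x y : cl_par U p x -> cl_par U p y -> cl_par U p (x + y)
| cl_parZ p (c : C) x : cl_par U p x -> cl_par U p (c *: x)
| cl_parM p u x : U u -> cl_par U p x -> cl_par U (~~ p) (iota u * x).

Lemma cl_parB U p x y : cl_par U p x -> cl_par U p y -> cl_par U p (x - y).
Proof. by move=> hx hy; rewrite -scaleN1r; apply/cl_parD/cl_parZ. Qed.

Lemma sub_cl_par U U' p x :
  (forall w, U w -> U' w) -> cl_par U p x -> cl_par U' p x.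
Proof.
move=> sUU'; elim=> {p x} [|p|p x y _ hx _ hy|p c x _ hx|p u x Uu _ hx].
- exact: cl_par1.
- exact: cl_par0.
- exact: cl_parD.
- exact: cl_parZ.
- by apply: cl_parM => //; exact: sUU'.
Qed.

Lemma cl_parMM U p q x y :
  cl_par U p x -> cl_par U q y -> cl_par U (p (+) q) (x * y).
Proof.
move=> + hy; elim=> {p x} [|p|p x1 x2 _ h1 _ h2|p c x _ h|p u x Uu _ h].
- by rewrite mul1r.
- by rewrite mul0r; exact: cl_par0.
- by rewrite mulrDl; exact: cl_parD.
- by rewrite -scalerAl; exact: cl_parZ.
- by rewrite -mulrA addNb; exact: cl_parM.
Qed.

Lemma cl_par_word U (s : seq (cseq R)) :
  List.Forall U s -> cl_par U (odd (size s)) (\prod_(u <- s) iota u).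
Proof.
elim: s => [|u s IH] Us; first by rewrite big_nil; exact: cl_par1.
rewrite big_cons; apply: cl_parM; first exact: List.Forall_inv Us.
exact/IH/List.Forall_inv_tail/Us.
Qed.

Lemma cl_par_words U p x : cl_par U p x ->
  exists k (c : 'I_k -> C) (w : 'I_k -> seq (cseq R)),
    (forall i, List.Forall U (w i) /\ odd (size (w i)) = p) /\
    x = \sum_(i < k) c i *: \prod_(u <- w i) iota u.
Proof.
elim=> {p x} [|p|p x y _ [k [c [w [hw ->]]]] _ [k' [c' [w' [hw' ->]]]]
             |p a x _ [k [c [w [hw ->]]]]|p u x Uu _ [k [c [w [hw ->]]]]].
- exists 1%N, (fun=> 1), (fun=> [::]).
  by rewrite big_ord1 big_nil scale1r.
- by exists 0%N, (fun=> 0), (fun=> [::]); split=> [[]|]; rewrite ?big_ord0.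
- exists (k + k')%N,
    (fun i => match fintype.split i with inl j => c j | inr j => c' j end),
    (fun i => match fintype.split i with inl j => w j | inr j => w' j end).
  split=> [i|]; first by case: (fintype.split i).
  rewrite big_split_ord; congr (_ + _); apply: eq_bigr => i _.
    by rewrite (unsplitK (inl i) : fintype.split (lshift k' i) = inl i).
  by rewrite (unsplitK (inr i) : fintype.split (rshift k i) = inr i).
- exists k, (fun i => a * c i), w; split=> //.
  by rewrite scaler_sumr; apply: eq_bigr => i _; rewrite scalerA.
- exists k, c, (fun i => u :: w i); split.
    by move=> i; have [Uw <-] := hw i; split; [exact: List.Forall_cons|].
  by rewrite mulr_sumr; apply: eq_bigr => i _; rewrite -scalerAr big_cons.
Qed.

Lemma cl_evenP U x : cl_even iota U x <-> cl_par U false x.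
Proof.
split=> [[k [c [w [hw ->]]]]|/cl_par_words [k [c [w [hw ->]]]]].
  apply: (big_ind (cl_par U false)) => [|y z|i _]; [exact: cl_par0|exact: cl_parD|].
  have [Uw /negbTE even_w] := hw i.
  by apply: cl_parZ; rewrite -even_w; exact: cl_par_word.
by exists k, c, w; split=> // i; have [Uw ->] := hw i.
Qed.

Lemma cl_par_anticomm U ee p x :
  (forall w, U w -> iota ee * iota w = - (iota w * iota ee)) ->
  cl_par U p x -> iota ee * x = (-1) ^+ p *: (x * iota ee).
Proof.
move=> anti; elim=> {p x} [|p|p x y _ hx _ hy|p c x _ hx|p u x Uu _ hx].
- by rewrite mulr1 mul1r scale1r.
- by rewrite mulr0 mul0r scaler0.
- by rewrite mulrDr mulrDl scalerDr hx hy.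
- by rewrite -scalerAr -scalerAl hx !scalerA mulrC.
- by rewrite mulrA anti // mulNr -[_ * _ * x]mulrA hx -scalerAr mulrA signrN scaleNr.
Qed.

Lemma alg_morph0 (h : A -> A) : alg_morph h -> h 0 = 0.
Proof. by case=> hD _ _ _; apply: (@addrI _ (h 0)); rewrite -hD !addr0. Qed.

Lemma alg_morph_cl_par (h : A -> A) U p x :
  alg_morph h -> (forall u, U u -> h (iota u) = - iota u) ->
  cl_par U p x -> h x = (-1) ^+ p *: x.
Proof.
move=> hmor hU; have [hD hM h1 hZ] := hmor.
elim=> {p x} [|p|p x y _ hx _ hy|p c x _ hx|p u x Uu _ hx].
- by rewrite h1 scale1r.
- by rewrite alg_morph0 // scaler0.
- by rewrite hD hx hy scalerDr.
- by rewrite hZ hx !scalerA mulrC.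
- by rewrite hM hU // hx mulNr -scalerAr signrN scaleNr.
Qed.

End ParityWords.

Section CliffordRelations.
Variables (R : realType) (A : algType (complex R)) (iota : cseq R -> A).
Local Notation C := (complex R).
Local Notation V := (@inV R).
Local Notation cl_par := (cl_par iota).
Hypothesis iota_scale_add : forall (c : C) u v, V u -> V v ->
  iota (sadd (sscale c u) v) = c *: iota u + iota v.
Hypothesis iota_sqr : forall v, V v -> iota v * iota v = (qf v)%:A.
Implicit Types (U : cseq R -> Prop) (u w ee : cseq R) (x y : A).

Lemma in_alg_inj (c d : C) : c%:A = d%:A :> A -> c = d.
Proof. exact: (@fmorph_inj _ _ (in_alg A)). Qed.

Lemma sscale1 u : sscale 1 u = u.
Proof. by apply/funext => k; rewrite /sscale mul1r. Qed.

Lemma inV_add u w : V u -> V w -> V (sadd u w).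
Proof. by rewrite -[u in sadd u]sscale1; exact: inV_scale_add. Qed.

Lemma iota_add u w : V u -> V w -> iota (sadd u w) = iota u + iota w.
Proof. by move=> Vu Vw; rewrite -[u in sadd u]sscale1 iota_scale_add // scale1r. Qed.

Lemma iota_anticomm u w : V u -> V w ->
  iota u * iota w + iota w * iota u = (bf u w)%:A.
Proof.
move=> Vu Vw; have := iota_sqr (inV_add Vu Vw).
rewrite iota_add // mulrDl !mulrDr !iota_sqr // /bf !scalerBl => <-.
by apply/eqP; rewrite eq_sym !subr_eq [X in _ == X]addrC !addrA.
Qed.

Lemma iota_anticomm0 u w : V u -> V w -> bf u w = 0 ->
  iota u * iota w = - (iota w * iota u).
Proof.
by move=> Vu Vw bf0; apply/eqP; rewrite -addr_eq0 iota_anticomm // bf0 scale0r.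
Qed.

Lemma bf_scale_add ee (c : C) u w : V ee -> V u -> V w ->
  bf ee (sadd (sscale c u) w) = c * bf ee u + bf ee w.
Proof.
move=> Vee Vu Vw; apply: in_alg_inj; rewrite scalerDl.
rewrite -scalerA -!iota_anticomm ?iota_scale_add //; last exact: inV_scale_add.
by rewrite mulrDr mulrDl -scalerAr -scalerAl scalerDr addrACA.
Qed.

Lemma bf_self ee : V ee -> bf ee ee = 2 * qf ee.
Proof.
move=> Vee; apply: in_alg_inj.
by rewrite -iota_anticomm // iota_sqr // -scalerDl -mulr2n mulr_natl.
Qed.

Lemma subspace_perp_within U ee : subspace U -> V ee -> subspace (perp_within U ee).
Proof.
move=> [UV Ucl] Vee; split=> [u [/UV] //|c u w [Uu bu] [Uw bw]].
split; first exact: Ucl.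
by rewrite bf_scale_add ?bu ?bw ?mulr0 ?addr0 //; apply: UV.
Qed.

Lemma perp_within_anticomm U ee w : subspace U -> V ee -> perp_within U ee w ->
  iota ee * iota w = - (iota w * iota ee).
Proof. by move=> [UV _] Vee [/UV Vw bw]; exact: iota_anticomm0. Qed.

Lemma cl_par_split_unit U ee p x : subspace U -> U ee -> qf ee = 1 ->
  cl_par U p x -> exists z y, cl_par (perp_within U ee) p z /\
    cl_par (perp_within U ee) (~~ p) y /\ x = z + iota ee * y.
Proof.
move=> sU Uee qee; have [UV Ucl] := sU; have Vee := UV _ Uee.
have sqr_ee : iota ee * iota ee = 1 by rewrite iota_sqr // qee scale1r.
elim=> {p x} [|p|p x1 x2 _ [z1 [y1 [hz1 [hy1 ->]]]] _ [z2 [y2 [hz2 [hy2 ->]]]]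
             |p c x _ [z [y [hz [hy ->]]]]|p u x Uu _ [z [y [hz [hy ->]]]]].
- by exists 1, 0; rewrite mulr0 addr0; split; [exact: cl_par1 | split; [exact: cl_par0|]].
- by exists 0, 0; rewrite mulr0 addr0; split; [|split]; try exact: cl_par0.
- exists (z1 + z2), (y1 + y2).
  by rewrite mulrDr addrACA; split; [|split]; try exact: cl_parD.
- exists (c *: z), (c *: y).
  by rewrite scalerDr scalerAr; split; [|split]; try exact: cl_parZ.
- pose al := bf ee u / 2; pose u' := sadd (sscale (- al) ee) u.
  have Vu := UV _ Uu.
  have perp_u' : perp_within U ee u'.
    split; first exact: Ucl.
    by rewrite bf_scale_add // bf_self // qee mulr1 mulNr divfK ?addNr ?pnatr_eq0.
  have iota_u : iota u = al *: iota ee + iota u'.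
    by rewrite iota_scale_add // scaleNr addNKr.
  have anti_u' : iota u' * iota ee = - (iota ee * iota u').
    by apply: iota_anticomm0; [exact: UV perp_u'.1 | | rewrite bfC perp_u'.2].
  exists (al *: y + iota u' * z), (al *: z - iota u' * y); split; [|split].
  + by apply: cl_parD; [exact: cl_parZ | exact: cl_parM].
  + by rewrite negbK; apply: cl_parB; [exact: cl_parZ | rewrite -[p]negbK; exact: cl_parM].
  rewrite iota_u mulrDl !mulrDr -!scalerAl mulrA sqr_ee mul1r mulrA.
  rewrite anti_u' mulNr -mulrA mulrN -scalerAr.
  by rewrite [al *: _ + al *: y]addrC -!addrA; congr (_ + _); exact: addrCA.
Qed.

Lemma cl_even_centr_unit U ee x : subspace U -> U ee -> qf ee = 1 ->
  cl_par U false x -> centr iota ee x -> cl_par (perp_within U ee) false x.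
Proof.
move=> sU Uee qee hx; have Vee := sU.1 _ Uee.
have [z [y [hz [hy ->]]]] := cl_par_split_unit sU Uee qee hx.
have anti := perp_within_anticomm sU Vee.
have Ez := cl_par_anticomm anti hz; have Ey := cl_par_anticomm anti hy.
rewrite expr0 scale1r in Ez; rewrite expr1 scaleN1r in Ey.
have sqr_ee : iota ee * iota ee = 1 by rewrite iota_sqr // qee scale1r.
rewrite /centr mulrDr mulrDl mulrA sqr_ee mul1r Ey mulNr -mulrA sqr_ee mulr1 Ez.
by move/addrI/eqP; rewrite -addr_eq0 addrr_eq0 => /eqP ->; rewrite mul0r subr0.
Qed.

Section Frame.
Variables (e : nat -> cseq R) (n : nat).
Hypothesis e_unit : forall i, (i < n)%N -> V (e i) /\ qf (e i) = 1.
Hypothesis e_orth : forall i j, (i < n)%N -> (j < n)%N -> i != j -> bf (e i) (e j) = 0.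
Local Notation frame_prod k := (\prod_(i < k) iota (e i)).

Lemma subspace_frame_perp k : (k <= n)%N -> subspace (frame_perp e k).
Proof.
elim: k => [_|k IH kn]; first exact: subspace_inV.
exact: subspace_perp_within (IH (ltnW kn)) (e_unit kn).1.
Qed.

Lemma frame_perp_next k : (k < n)%N -> frame_perp e k (e k).
Proof.
move=> kn; apply/frame_perpP; split=> [|i ik]; first exact: (e_unit kn).1.
by apply: e_orth; rewrite ?(ltn_trans ik) ?ltn_eqF.
Qed.

Lemma frame_anticomm i j : (i < n)%N -> (j < n)%N -> i != j ->
  iota (e i) * iota (e j) = - (iota (e j) * iota (e i)).
Proof.
move=> i_n j_n ij; apply: iota_anticomm0; last exact: e_orth.
  exact: (e_unit i_n).1.
exact: (e_unit j_n).1.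
Qed.

Lemma frame_anticomm_lt k i : (k < n)%N -> (i < k)%N ->
  iota (e k) * iota (e i) = - (iota (e i) * iota (e k)).
Proof.
by move=> kn ik; apply: frame_anticomm => //; [exact: ltn_trans ik kn | rewrite gtn_eqF].
Qed.

Lemma cl_even_centr_frame k x : (k <= n)%N -> cl_par V false x ->
  (forall j, (j < k)%N -> centr iota (e j) x) -> cl_par (frame_perp e k) false x.
Proof.
elim: k => [//|k IH] kn hx comm.
apply: cl_even_centr_unit; [exact: subspace_frame_perp (ltnW kn) | exact: frame_perp_next
  | exact: (e_unit kn).2 | | exact: comm].
by apply: IH (ltnW kn) hx _ => j jk; apply: comm (ltnW jk).
Qed.

Lemma cl_par_frame_prod k :
  cl_par (fun u => exists2 i, (i < k)%N & u = e i) (odd k) (frame_prod k).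
Proof.
elim: k => [|k IH]; first by rewrite big_ord0; exact: cl_par1.
rewrite big_ord_recr /= -addbT; apply: cl_parMM.
  by apply: sub_cl_par IH => _ [i ik ->]; exists i; first exact: ltnW.
by rewrite -[iota (e k)]mulr1; apply: (cl_parM (p := false)); [exists k | exact: cl_par1].
Qed.

Lemma iota_frame_prod_anticomm w k :
  (forall i, (i < k)%N -> iota w * iota (e i) = - (iota (e i) * iota w)) ->
  iota w * frame_prod k = (-1) ^+ k *: (frame_prod k * iota w).
Proof.
move=> anti; rewrite -signr_odd.
by apply: cl_par_anticomm (cl_par_frame_prod k) => _ [i ik ->]; exact: anti.
Qed.

Lemma frame_prod_comm j k : (k <= n)%N -> (j < k)%N ->
  iota (e j) * frame_prod k = (-1) ^+ k.+1 *: (frame_prod k * iota (e j)).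
Proof.
elim: k => [//|k IH] kn; rewrite ltnS leq_eqVlt => /predU1P [->|jk].
  rewrite big_ord_recr /= mulrA iota_frame_prod_anticomm => [|i]; last exact: frame_anticomm_lt.
  by rewrite -scalerAl !exprS !mulN1r opprK.
rewrite big_ord_recr /= mulrA IH ?(ltnW kn) // -scalerAl -mulrA (frame_anticomm_lt kn jk).
by rewrite mulrN mulrA [in RHS]exprS mulN1r scaleNr scalerN opprK.
Qed.

Lemma frame_prod_sqr k :
  (k <= n)%N -> frame_prod k * frame_prod k = ((-1) ^+ 'C(k, 2))%:A.
Proof.
elim: k => [_|k IH kn]; first by rewrite big_ord0 mulr1 expr0 scale1r.
rewrite big_ord_recr /= mulrA -[_ * _ * frame_prod k]mulrA.
rewrite iota_frame_prod_anticomm => [|i]; last exact: frame_anticomm_lt.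
have [Vek qek] := e_unit kn.
rewrite -scalerAr -scalerAl !mulrA IH ?(ltnW kn) // -mulrA iota_sqr // qek scale1r mulr1.
by rewrite scalerA binS bin1 exprD mulrC.
Qed.

Lemma centr_frame_prod_cl_even x y : odd n ->
  cl_par (frame_perp e n) false x -> cl_par (frame_perp e n) false y ->
  forall j, (j < n)%N -> centr iota (e j) (frame_prod n * x + y).
Proof.
move=> odd_n hx hy j jn.
have anti w : frame_perp e n w -> iota (e j) * iota w = - (iota w * iota (e j)).
  case/frame_perpP=> Vw perp_w.
  by apply: iota_anticomm0; [exact: (e_unit jn).1 | | exact: perp_w].
have := cl_par_anticomm anti hx; have := cl_par_anticomm anti hy.
rewrite !expr0 !scale1r => Ey Ex.
rewrite /centr mulrDr mulrDl Ey mulrA frame_prod_comm // -signr_odd /= odd_n expr0 scale1r.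
by rewrite -!mulrA Ex.
Qed.

End Frame.

End CliffordRelations.

Section Universality.
Variables (R : realType) (A : algType (complex R)) (iota : cseq R -> A).
Local Notation V := (@inV R).
Local Notation cl_par := (cl_par iota).

Definition even_odd_sum (a : A) : Prop :=
  exists a0 a1, cl_par V false a0 /\ cl_par V true a1 /\ a = a0 + a1.

Definition even_odd_pred : {pred A} := fun a => `[< even_odd_sum a >].

Lemma even_odd_subalg_closed : GRing.subsemialg_closed even_odd_pred.
Proof.
split; [apply/asboolP; exists 1, 0 | split | |].
- by rewrite addr0; split; [exact: cl_par1 | split; [exact: cl_par0|]].
- apply/asboolP; exists 0, 0.
  by rewrite addr0; split; [exact: cl_par0 | split; [exact: cl_par0|]].
- move=> x y /asboolP [x0 [x1 [hx0 [hx1 ->]]]] /asboolP [y0 [y1 [hy0 [hy1 ->]]]].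
  apply/asboolP; exists (x0 + y0), (x1 + y1).
  by rewrite addrACA; split; [|split]; try exact: cl_parD.
- move=> c x /asboolP [x0 [x1 [hx0 [hx1 ->]]]].
  apply/asboolP; exists (c *: x0), (c *: x1).
  by rewrite scalerDr; split; [|split]; try exact: cl_parZ.
- move=> x y /asboolP [x0 [x1 [hx0 [hx1 ->]]]] /asboolP [y0 [y1 [hy0 [hy1 ->]]]].
  apply/asboolP; exists (x0 * y0 + x1 * y1), (x0 * y1 + x1 * y0); split; [|split].
  + by apply: cl_parD; [exact: (cl_parMM hx0 hy0) | exact: (cl_parMM hx1 hy1)].
  + by apply: cl_parD; [exact: (cl_parMM hx0 hy1) | exact: (cl_parMM hx1 hy0)].
  by rewrite mulrDl !mulrDr [x1 * y0 + _]addrC addrACA.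
Qed.

Definition even_odd_subalg := {a : A | a \in even_odd_pred}.
HB.instance Definition _ :=
  [isSub of even_odd_subalg for @sval A (fun a => a \in even_odd_pred)].
HB.instance Definition _ := [Choice of even_odd_subalg by <:].
HB.instance Definition _ := GRing.SubChoice_isSubAlgebra.Build _ A even_odd_pred
  even_odd_subalg even_odd_subalg_closed.

Hypothesis hcl : is_clifford iota.

(* The corestriction of iota to the subalgebra even_odd_subalg extends to a morphism
   A -> even_odd_subalg; by uniqueness, its composite with the inclusion is the identity. *)
Lemma even_odd_sumP a : even_odd_sum a.
Proof.
have [[iota_scale_add iota_sqr] univ] := hcl.
have iota_in u : V u -> iota u \in even_odd_pred.
  move=> Vu; apply/asboolP; exists 0, (iota u * 1); rewrite mulr1 add0r.
  split; [exact: cl_par0 | split=> //].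
  by rewrite -[iota u]mulr1; exact: (cl_parM (p := false) Vu (cl_par1 _ _)).
pose g u : even_odd_subalg := insubd (0 : even_odd_subalg) (iota u).
have gE u : V u -> val (g u) = iota u by move=> Vu; rewrite insubdK ?iota_in.
have g_data : clifford_data g.
  split=> [c u v Vu Vv|v Vv]; apply: val_inj.
    rewrite gE; last exact: inV_scale_add.
    by rewrite iota_scale_add // -(gE _ Vu) -(gE _ Vv).
  by rewrite [LHS]/= gE // iota_sqr.
have [[h [[hD hM h1 hZ] h_iota]] _] := univ _ g g_data.
have val_h_morph : alg_morph (fun x => val (h x)).
  by split=> [x y|x y||c x]; rewrite ?hD ?hM ?h1 ?hZ.
have [_ uniq] := univ A iota (conj iota_scale_add iota_sqr).
have id_morph : alg_morph (@id A) by [].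
have := uniq _ _ val_h_morph id_morph
  (fun v Vv => etrans (congr1 val (h_iota v Vv)) (gE _ Vv)) (fun _ _ => erefl).
by move=> /(_ a) <-; have /asboolP := valP (h a).
Qed.

Lemma grading_automorphism :
  exists h : A -> A, alg_morph h /\ forall u, V u -> h (iota u) = - iota u.
Proof.
have [[iota_scale_add iota_sqr] univ] := hcl.
have data : clifford_data (fun u => - iota u).
  by split=> [c u v Vu Vv|v Vv]; rewrite ?iota_scale_add ?opprD ?scalerN ?mulrNN ?iota_sqr.
by have [[h [hmor hh]] _] := univ A _ data; exists h.
Qed.

Lemma centr_even_odd v a0 a1 : V v -> cl_par V false a0 -> cl_par V true a1 ->
  centr iota v (a0 + a1) -> centr iota v a0 /\ centr iota v a1.
Proof.
move=> Vv ha0 ha1 comm.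
have [h [hmor hh]] := grading_automorphism; have [hD hM _ _] := hmor.
have := alg_morph_cl_par hmor hh ha0; have := alg_morph_cl_par hmor hh ha1.
rewrite expr0 expr1 scale1r scaleN1r => h_a1 h_a0.
pose D x := iota v * x - x * iota v.
have DD x y : D (x + y) = D x + D y by rewrite /D mulrDr mulrDl opprD addrACA.
have DN x : D (- x) = - D x by rewrite /D mulrN mulNr opprK opprB addrC.
have Dsum : D a0 + D a1 = 0 by rewrite -DD /D comm subrr.
have Ddiff : D a0 - D a1 = 0.
  have := congr1 h comm; rewrite !hM hh // hD h_a0 h_a1 mulNr mulrN => /oppr_inj comm'.
  by rewrite -DN -DD /D comm' subrr.
have D_a0 : D a0 = 0 by apply/eqP; rewrite -addrr_eq0 {2}(subr0_eq Ddiff) Dsum.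
by split; apply: subr0_eq; rewrite -/(D _) // -(subr0_eq Ddiff).
Qed.

Lemma centralizer_frame n (e : nat -> cseq R) : odd n ->
  (forall i, (i < n)%N -> V (e i) /\ qf (e i) = 1) ->
  (forall i j, (i < n)%N -> (j < n)%N -> i != j -> bf (e i) (e j) = 0) ->
  forall a : A, (forall i : 'I_n, centr iota (e i) a) <->
    exists x y, cl_even iota (frame_perp e n) x /\ cl_even iota (frame_perp e n) y /\
                a = (\prod_(i < n) iota (e i)) * x + y.
Proof.
have [[iota_scale_add iota_sqr] _] := hcl.
move=> odd_n e_unit e_orth a.
split=> [comm|[x [y [/cl_evenP hx [/cl_evenP hy ->]]]] i]; last first.
  exact: centr_frame_prod_cl_even.
have [a0 [a1 [ha0 [ha1 a_eq]]]] := even_odd_sumP a.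
have comm01 j : (j < n)%N -> centr iota (e j) a0 /\ centr iota (e j) a1.
  move=> jn; apply: centr_even_odd (e_unit _ jn).1 ha0 ha1 _.
  by rewrite -a_eq; exact: comm (Ordinal jn).
set E := \prod_(i < n) iota (e i); set s : complex R := (-1) ^+ 'C(n, 2).
have E_sqr : E * E = s%:A := frame_prod_sqr iota_scale_add iota_sqr e_unit e_orth (leqnn n).
have centr_frame := cl_even_centr_frame iota_scale_add iota_sqr e_unit e_orth (leqnn n).
exists (s *: (E * a1)), a0; rewrite !cl_evenP; split; [|split].
- apply: centr_frame => [|j jn].
    rewrite (_ : false = odd n (+) true); last by rewrite odd_n.
    apply/cl_parZ/cl_parMM => //.
    by apply: sub_cl_par (cl_par_frame_prod iota e n) => _ [i /e_unit [Vei _] ->].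
  rewrite /centr -scalerAr -scalerAl mulrA.
  rewrite (frame_prod_comm iota_scale_add iota_sqr e_unit e_orth (leqnn n) jn).
  by rewrite -signr_odd /= odd_n expr0 scale1r -mulrA (comm01 _ jn).2 mulrA.
- by apply: centr_frame ha0 _ => j /comm01 [].
by rewrite -scalerAr mulrA E_sqr mulr_algl signrZK addrC.
Qed.

End Universality.

Theorem lemma4 (R : realType) (A : algType (complex R)) (iota : cseq R -> A) :
  is_clifford iota ->
  (* (A) *)
  (forall v : cseq R, inV v -> qf v = 1 ->
     forall a : A, centr iota v a <->
       exists x y, cl_even iota (perp v) x /\ cl_even iota (perp v) y /\
                   a = iota v * x + y) /\
  (* (B) *)
  (forall n : nat, odd n ->
     let U := fun w => forall i : 'I_n, perp (unitv R i.+1) w in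
     forall a : A, (forall i : 'I_n, centr iota (unitv R i.+1) a) <->
       exists x y, cl_even iota U x /\ cl_even iota U y /\
                   a = (\prod_(i < n) iota (unitv R i.+1)) * x + y).
Proof.
move=> hcl; split=> [v Vv qv a|n odd_n U a].
  have := centralizer_frame hcl (e := fun=> v) (n := 1) erefl (fun _ _ => conj Vv qv).
  move=> /(_ _ a); rewrite big_ord1 => <- //; last by case=> [|//] [].
  by split=> [comm_a i|/(_ ord0)].
have -> : U = frame_perp (fun i => unitv R i.+1) n.
  apply/funext => w; apply/propext; rewrite frame_perpP.
  split=> [perp_w|[Vw perp_w] i]; last by split=> //; exact: perp_w.
  split=> [|i i_n]; first by case: (perp_w (Ordinal (odd_gt0 odd_n))).
  by case: (perp_w (Ordinal i_n)).
apply: centralizer_frame => // [i _|i j _ _]; last exact: bf_unitv.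
by split; [exact: inV_unitv | exact: qf_unitv].
Qed.
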